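(* Let $(M,\cdot,1)$ be a monoid and $\Sigma$ a finite alphabet. Let $A1,\dots,An$ be $n\ge1$ minimal and transition-equalized $M$-DFAs, and for each $k$ let $(g_{Ak},f_{Ak})$ be the natural factorization on $L$ induced by $Ak$ (for some selection function). Let $(g,f)=(g_{A1},f_{A1})\ast(g_{A2},f_{A2})\ast\cdots\ast(g_{An},f_{An})$. Then $$\mathrm{RcgCap}^{(g,f)}_L\supseteq\bigcup_{k=1}^n\mathrm{RcgCap}^{(g_{Ak},f_{Ak})}_L.$$
   Context: $L$ is the set of all functions $\Sigma^*\to M$; $\varepsilon$ the empty word; $(m\cdot\ell)(\gamma)=m\cdot\ell(\gamma)$; $\Delta_\alpha(\ell)(\gamma)=\ell(\alpha\gamma)$. A factorization on $L$ is a pair $g:L\to M$, $f:L\to L$ with $g(\ell)\cdot f(\ell)=\ell$. The composition is $(g_1,f_1)\ast(g_2,f_2)=(g_1\cdot(g_2\circ f_1),f_2\circ f_1)$ with $(g\cdot g')(\ell)=g(\ell)\cdot g'(\ell)$ (associative). Define $S^{(g,f)}_\varepsilon=\mathrm{id}_L$, $S^{(g,f)}_{\alpha\sigma}=f\circ\Delta_\sigma\circ S^{(g,f)}_\alpha$. $\mathrm{RcgCap}^{(g,f)}_L$ is the set of $\ell\in L$ such that $\{S^{(g,f)}_\alpha(f(\ell))\mid\alpha\in\Sigma^*\}$ is finite (equivalently, the automaton $N^{(g,f)}(f(\ell),1)$ with these states is an $M$-DFA). An $M$-DFA is $A=(Q,\Sigma,u,i_u,\delta,w,\rho)$ with $Q$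 finite nonempty, initial state $u$, initial value $i_u\in M$, $\delta:Q\times\Sigma\to Q$, $w:Q\times\Sigma\to M$, $\rho:Q\to M$; with $q\alpha$ the extended transition and $w^*(q,\varepsilon)=1$, $w^*(q,\alpha\sigma)=w^*(q,\alpha)\cdot w(q\alpha,\sigma)$, $\mathcal{A}(\alpha)=i_u\cdot w^*(u,\alpha)\cdot\rho(u\alpha)$ is its language and $\mathcal{A}_q(\alpha)=w^*(q,\alpha)\cdot\rho(q\alpha)$. Minimal: no $M$-DFA with the same language has fewer states. Transition-equalized: $\Delta_\sigma(\mathcal{A}_q)=\Delta_\tau(\mathcal{A}_p)$ implies $\delta(q,\sigma)=\delta(p,\tau)$ and $w(q,\sigma)=w(p,\tau)$. Natural factorization induced by $A$: $P_A=\{((\sigma,q),\Delta_\sigma(\mathcal{A}_q))\mid\sigma\in\Sigma,q\in Q\}\cup\{((\varepsilon,u),\mathcal{A})\}$, with elements equivalent iff their language components are equal; a selection function $\pi$ chooses a representative per class, always $((\varepsilon,u),\mathcal{A})$ for its class. $f_A(\mathcal{A})=\mathcal{A}_u$, $g_A(\mathcal{A})=i_u$; if $\ell\neq\mathcal{A}$ is the language component of a class with representative $((\sigma,q),\Delta_\sigma(\mathcal{A}_q))$, then $f_A(\ell)=\mathcal{A}_{q\sigma}$, $g_A(\ell)=w(q,\sigma)$; otherwise $f_A(\ell)=\ell$, $g_A(\ell)=1$. *)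

From Stdlib Require Import ClassicalEpsilon.
From mathcomp Require Import all_boot.

Set Implicit Arguments.
Unset Strict Implicit.
Unset Printing Implicit Defensive.

Record monoid := Monoid {
  mcar :> Type;
  mmul : mcar -> mcar -> mcar;
  mone : mcar;
  mmulA : forall x y z, mmul x (mmul y z) = mmul (mmul x y) z;
  mmul1l : forall x, mmul mone x = x;
  mmul1r : forall x, mmul x mone = x
}.

Section Defs.
Variables (Mo : monoid) (Sigma : finType).

Definition lang := seq Sigma -> Mo.

Definition scal (m : Mo) (l : lang) : lang := fun g => mmul m (l g).
Definition Delta (a : Sigma) (l : lang) : lang := fun g => l (a :: g).

Definition fact := ((lang -> Mo) * (lang -> lang))%type.

Definition is_factorization (gf : fact) : Prop :=
  forall l, scal (gf.1 l) (gf.2 l) = l.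

Definition comp (gf1 gf2 : fact) : fact :=
  (fun l => mmul (gf1.1 l) (gf2.1 (gf1.2 l)), fun l => gf2.2 (gf1.2 l)).

(* n-fold composition of a nonempty list (comp is associative) *)
Definition comp_list (s : seq fact) : fact :=
  match s with
  | [::] => (fun _ => mone Mo, fun l => l)
  | x :: s' => foldl comp x s'
  end.

Definition Sop (gf : fact) (al : seq Sigma) (l : lang) : lang :=
  foldl (fun l' a => gf.2 (Delta a l')) l al.

Definition RcgCap (gf : fact) (l : lang) : Prop :=
  exists s : list lang, forall al, List.In (Sop gf al (gf.2 l)) s.

Record DFA := MkDFA {
  st : finType;
  init : st;
  iinit : Mo;
  delta : st -> Sigma -> st;
  wt : st -> Sigma -> Mo;
  rho : st -> Mo
}.

Definition dstar (A : DFA) (q : st A) (al : seq Sigma) : st A :=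
  foldl (@delta A) q al.

Definition wstar (A : DFA) (q : st A) (al : seq Sigma) : Mo :=
  (foldl (fun (pm : st A * Mo) a => (delta pm.1 a, mmul pm.2 (wt pm.1 a)))
         (q, mone Mo) al).2.

Definition dlang (A : DFA) : lang :=
  fun al => mmul (mmul (iinit A) (wstar (init A) al)) (rho (dstar (init A) al)).

Definition dlangq (A : DFA) (q : st A) : lang :=
  fun al => mmul (wstar q al) (rho (dstar q al)).

Definition minimal (A : DFA) : Prop :=
  forall B : DFA, dlang B = dlang A -> #|st A| <= #|st B|.

Definition trans_equalized (A : DFA) : Prop :=
  forall (q p : st A) (a b : Sigma),
    Delta a (dlangq q) = Delta b (dlangq p) ->
    delta q a = delta p b /\ wt q a = wt p b.

(* Selection function: for each language l, the representative of the class
   of elements of P_A whose language component is l.  [Some (a,q)] stands for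
   ((a,q), Delta_a(A_q)); the representative ((eps,u), A) of the class of A
   is handled separately in the definition of the natural factorization. *)
Definition selfun (A : DFA) := lang -> option (Sigma * st A).

Definition selection (A : DFA) (pi : selfun A) : Prop :=
  forall l,
    (forall a q, pi l = Some (a, q) -> Delta a (dlangq q) = l) /\
    ((exists (a : Sigma) (q : st A), Delta a (dlangq q) = l) -> pi l <> None).

Definition nat_f (A : DFA) (pi : selfun A) (l : lang) : lang :=
  if excluded_middle_informative (l = dlang A) then dlangq (init A)
  else match pi l with
       | Some (a, q) => dlangq (delta q a)
       | None => l
       end.

Definition nat_g (A : DFA) (pi : selfun A) (l : lang) : Mo :=
  if excluded_middle_informative (l = dlang A) then iinit A
  else match pi l with
       | Some (a, q) => wt q a
       | None => mone Mo
       end.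

Definition nat_fact (A : DFA) (pi : selfun A) : fact := (nat_g pi, nat_f pi).

End Defs.

(* The composite f = f_n o ... o f_1 of the natural factorizations either
   sends a language into the finite set of state languages A_k,q of the
   automata, or fixes it, as does every f_k: each f_k maps the languages it
   acts on to state languages of A_k and is the identity elsewhere.  The set
   of state languages absorbs the orbit of f: Delta_a of a state language of
   A_j is a language component of P_{A_j}, so the selection function makes f_j
   act on it, and f sends it back to a state language.  Hence each
   S_alpha(f l) is a state language or equals the corresponding element of the
   orbit of f_k l, and finiteness transfers from f_k to f. *)

From Stdlib Require Import ClassicalEpsilon.
From Stdlib Require List.
From mathcomp Require Import all_boot.

Set Implicit Arguments.
Unset Strict Implicit.
Unset Printing Implicit Defensive.

Lemma mem_In (T : eqType) (x : T) (s : seq T) : x \in s -> List.In x s.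
Proof.
elim: s => [|y s IH] //=; rewrite inE => /orP [/eqP ->|/IH]; by [left|right].
Qed.

Section FoldIntoOrFix.

Variables (X : Type) (I : eqType) (P : X -> Prop) (f : I -> X -> X).
Hypothesis f_into_or_fix : forall k y, P (f k y) \/ f k y = y.

Lemma foldl_stays ks y : P y -> P (foldl (fun y k => f k y) y ks).
Proof.
elim: ks y => [|k ks IH] y //= Py; apply: IH.
by case: (f_into_or_fix k y) => [|->].
Qed.

Lemma foldl_into_or_fix ks y :
  P (foldl (fun y k => f k y) y ks) \/
  foldl (fun y k => f k y) y ks = y /\ {in ks, forall k, f k y = y}.
Proof.
elim: ks y => [|k ks IH] y /=; first by right.
case: (f_into_or_fix k y) => [Pky|fix_k]; first by left; apply: foldl_stays.
rewrite fix_k; case: (IH y) => [|[-> fix_ks]]; first by left.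
by right; split=> // j; rewrite inE => /orP [/eqP ->|/fix_ks].
Qed.

Lemma foldl_into ks k y :
  k \in ks -> P (f k y) -> P (foldl (fun y k => f k y) y ks).
Proof.
move=> ks_k Pky; case: (foldl_into_or_fix ks y) => [//|[-> fix_ks]].
by rewrite -(fix_ks k ks_k).
Qed.

End FoldIntoOrFix.

Section Factorizations.

Variables (Mo : monoid) (Sigma : finType).
Implicit Types (gf : fact Mo Sigma) (l y : lang Mo Sigma).

Lemma comp_list_snd (I : Type) (F : I -> fact Mo Sigma) ks y :
  (comp_list [seq F k | k <- ks]).2 y = foldl (fun y k => (F k).2 y) y ks.
Proof.
case: ks => [|k ks] //=; elim: ks (F k) y => [|k' ks IH] gf y //=.
by rewrite IH.
Qed.

Lemma Sop_into_or_eq (P : lang Mo Sigma -> Prop) gf gf' :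
  (forall y, P (gf.2 y) \/ gf.2 y = gf'.2 y) ->
  (forall a y, P y -> P (gf.2 (Delta a y))) ->
  forall al y y', P y \/ y = y' -> P (Sop gf al y) \/ Sop gf al y = Sop gf' al y'.
Proof.
move=> into_or_eq absorb; rewrite /Sop.
elim=> [|a al IH] y y' //= Py; apply: IH.
by case: Py => [Py|<-]; [left; apply: absorb|apply: into_or_eq].
Qed.

Lemma RcgCap_of_into_or_eq (P : lang Mo Sigma -> Prop) (s : seq (lang Mo Sigma))
    gf gf' l :
  (forall y, P y -> List.In y s) ->
  (forall y, P (gf.2 y) \/ gf.2 y = gf'.2 y) ->
  (forall a y, P y -> P (gf.2 (Delta a y))) ->
  RcgCap gf' l -> RcgCap gf l.
Proof.
move=> cover into_or_eq absorb [t orbit_t]; exists (s ++ t) => al.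
apply/List.in_or_app.
case: (Sop_into_or_eq into_or_eq absorb al (into_or_eq l)) => [/cover|->].
  by left.
by right; apply: orbit_t.
Qed.

End Factorizations.

Section NaturalFactorization.

Variables (Mo : monoid) (Sigma : finType) (A : DFA Mo Sigma) (pi : selfun A).

Lemma nat_f_state_or_id y :
  (exists q : st A, nat_f pi y = dlangq q) \/ nat_f pi y = y.
Proof.
rewrite /nat_f; case: excluded_middle_informative => ?.
  by left; exists (init A).
by case: (pi y) => [[a q]|]; [left; exists (delta q a)|right].
Qed.

Lemma nat_f_Delta_state : selection pi ->
  forall a (q : st A), exists q' : st A, nat_f pi (Delta a (dlangq q)) = dlangq q'.
Proof.
move=> sel a q; rewrite /nat_f; case: excluded_middle_informative => ?.
  by exists (init A).
case pi_Delta: (pi _) => [[b p]|]; first by exists (delta p b).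
have [_ covered] := sel (Delta a (dlangq q)).
by case: (covered _ pi_Delta); exists a, q.
Qed.

End NaturalFactorization.

Section StateLanguages.

Variables (Mo : monoid) (Sigma : finType) (I : finType) (A : I -> DFA Mo Sigma).

Definition state_lang (y : lang Mo Sigma) : Prop :=
  exists k (q : st (A k)), y = dlangq q.

Definition state_langs : seq (lang Mo Sigma) :=
  List.flat_map (fun k => List.map (@dlangq _ _ (A k)) (enum (st (A k)))) (enum I).

Lemma state_langs_cover y : state_lang y -> List.In y state_langs.
Proof.
case=> k [q ->]; apply/List.in_flat_map; exists k.
by split; [|apply: List.in_map]; apply: mem_In; rewrite mem_enum.
Qed.

End StateLanguages.

Theorem lemma7 (Mo : monoid) (Sigma : finType) (n : nat)
  (A : 'I_n.+1 -> DFA Mo Sigma)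
  (pi : forall k : 'I_n.+1, selfun (A k))
  (Hmin : forall k, minimal (A k))
  (Hte : forall k, trans_equalized (A k))
  (Hpi : forall k, selection (pi k))
  (l : lang Mo Sigma) :
  (exists k : 'I_n.+1, RcgCap (nat_fact (pi k)) l) ->
  RcgCap (comp_list [seq nat_fact (pi k) | k <- enum 'I_n.+1]) l.
Proof.
have f_into_or_fix j y : state_lang A (nat_f (pi j) y) \/ nat_f (pi j) y = y.
  by case: (nat_f_state_or_id (pi j) y) => [[q ->]|]; [left; exists j, q|right].
case=> k; apply: (RcgCap_of_into_or_eq (@state_langs_cover _ _ _ A));
  [move=> y|move=> a _ [j [q ->]]]; rewrite comp_list_snd.
- case: (foldl_into_or_fix f_into_or_fix (enum 'I_n.+1) y) => [|[-> fix_all]];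
    first by left.
  by right; rewrite /= fix_all ?mem_enum.
- apply: (foldl_into f_into_or_fix (mem_enum _ j)).
  by have [q' ->] := nat_f_Delta_state (Hpi j) a q; exists j, q'.
Qed.
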